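(* Let $n$ be a square-free integer with $n\neq 1$. For every $(a,b,c)\in A(n)$ there exists $g\in H(2)$ such that $g(a,b,c)\in B(n)$, where $B(n)=\{(a,b,c)\in A(n): |a|\leq|b|,\ |a|\leq|c|\}$.
   Context: $A(n)=\{(a,b,c)\in\mathbb{Z}^3: bc=a^2-n\}$, in bijection with $\mathbb{Q}^*(\sqrt n)=\{\frac{a+\sqrt n}{c}: a,c\in\mathbb Z, c\neq 0, \frac{a^2-n}{c}\in\mathbb Z\}$ via $\frac{a+\sqrt n}{c}\mapsto (a,\frac{a^2-n}{c},c)$. $H(2)$ is the group generated by $x:z\mapsto -1/z$ and $w_2:z\mapsto z+2$, acting on triples by $x(a,b,c)=(-a,c,b)$ and $w_{2k}(a,b,c)=(a+2kc,\,4ka+b+4k^2c,\,c)$ for $k\in\mathbb Z$. *)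

From Stdlib Require Import ZArith.
Open Scope Z_scope.

Definition triple := (Z * Z * Z)%type.

Definition squarefree (n : Z) : Prop :=
  forall d : Z, (d * d | n) -> Z.abs d = 1.

Definition inA (n : Z) (t : triple) : Prop :=
  let '(a, b, c) := t in b * c = a * a - n.

Definition inB (n : Z) (t : triple) : Prop :=
  let '(a, b, c) := t in inA n t /\ Z.abs a <= Z.abs b /\ Z.abs a <= Z.abs c.

(* action of x : z |-> -1/z *)
Definition act_x (t : triple) : triple :=
  let '(a, b, c) := t in (- a, c, b).

(* action of w_{2k} : z |-> z + 2k *)
Definition act_w (k : Z) (t : triple) : triple :=
  let '(a, b, c) := t in (a + 2 * k * c, 4 * k * a + b + 4 * k * k * c, c).

(* H(2) acting on triples: the group generated by x and w_2, i.e. all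
   finite compositions of x, w_2 and w_2^{-1} = w_{-2} (x is an involution). *)
Inductive H2 : (triple -> triple) -> Prop :=
| H2_id : H2 (fun t => t)
| H2_x : forall g, H2 g -> H2 (fun t => act_x (g t))
| H2_w : forall g, H2 g -> H2 (fun t => act_w 1 (g t))
| H2_winv : forall g, H2 g -> H2 (fun t => act_w (-1) (g t)).

From Stdlib Require Import ZArith Lia Wf_nat.
Open Scope Z_scope.

(* Idea: H(2) contains every translation w_{2k} (k in Z) and the inversion x.
   For (a,b,c) in A(n), square-freeness of n and n <> 1 force b c <> 0
   (otherwise n = a^2 would be a square different from 1).  If |a| > |c|,
   a suitable w_{2k} replaces a by a + 2kc with |a + 2kc| <= |c| < |a|; if
   |a| > |b|, first apply x, which swaps b and c and negates a, then do the
   same.  Each step preserves A(n) and strictly decreases |a|, so a descent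
   on |a| ends in B(n). *)

Definition realised (f : triple -> triple) : Prop :=
  exists g, H2 g /\ forall t, g t = f t.

Lemma H2_comp g h : H2 g -> H2 h -> H2 (fun t => g (h t)).
Proof.
  intros Hg Hh; induction Hg.
  - exact Hh.
  - now apply (H2_x (fun t => g (h t))).
  - now apply (H2_w (fun t => g (h t))).
  - now apply (H2_winv (fun t => g (h t))).
Qed.

Lemma realised_comp f h :
  realised f -> realised h -> realised (fun t => f (h t)).
Proof.
  intros [g [Hg Eg]] [k [Hk Ek]].
  exists (fun t => g (k t)); split.
  - now apply H2_comp.
  - intro t; now rewrite Ek, Eg.
Qed.

Lemma realised_id : realised (fun t => t).
Proof. exists (fun t => t); split; [exact H2_id | reflexivity]. Qed.

Lemma realised_x : realised act_x.
Proof.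
  exists (fun t => act_x t); split; [| reflexivity].
  exact (H2_x (fun t => t) H2_id).
Qed.

Lemma act_w_add j k t : act_w j (act_w k t) = act_w (j + k) t.
Proof.
  destruct t as [[a b] c]; unfold act_w; apply f_equal2; [apply f_equal2 |]; ring.
Qed.

Lemma act_w0 t : act_w 0 t = t.
Proof. destruct t as [[a b] c]; unfold act_w; apply f_equal2; [apply f_equal2 |]; ring. Qed.

Lemma realised_w k : realised (act_w k).
Proof.
  induction k as [|k [g [Hg Eg]]|k [g [Hg Eg]]] using Z.peano_ind.
  - destruct realised_id as [g [Hg Eg]].
    exists g; split; [exact Hg | intro t; now rewrite Eg, act_w0].
  - exists (fun t => act_w 1 (g t)); split; [now apply H2_w |].
    intro t; rewrite Eg, act_w_add; f_equal; lia.
  - exists (fun t => act_w (-1) (g t)); split; [now apply H2_winv |].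
    intro t; rewrite Eg, act_w_add; f_equal; lia.
Qed.

Lemma inA_x n t : inA n t -> inA n (act_x t).
Proof. destruct t as [[a b] c]; unfold inA, act_x; lia. Qed.

Lemma inA_w n k t : inA n t -> inA n (act_w k t).
Proof.
  destruct t as [[a b] c]; unfold inA, act_w; intro H.
  assert (n = a * a - b * c) as -> by lia; ring.
Qed.

Lemma small_shift a c : c <> 0 -> exists k, Z.abs (a + 2 * k * c) <= Z.abs c.
Proof.
  intro Hc.
  pose proof (Z.div_mod a (2 * Z.abs c) ltac:(lia)) as D.
  pose proof (Z.mod_pos_bound a (2 * Z.abs c) ltac:(lia)) as B.
  set (q := a / (2 * Z.abs c)) in *; set (r := a mod (2 * Z.abs c)) in *.
  destruct (Z_le_gt_dec 0 c); [rewrite Z.abs_eq in * by lia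
                              | rewrite Z.abs_neq in * by lia];
    destruct (Z_le_gt_dec r (Z.abs c)).
  - exists (- q); lia.
  - exists (- q - 1); lia.
  - exists q; lia.
  - exists (q + 1); lia.
Qed.

(* For square-free n <> 1, no triple of A(n) has b c = 0: otherwise
   a^2 = n, so a * a divides n and square-freeness gives |a| = 1, n = 1. *)
Lemma inA_nondegenerate n a b c :
  squarefree n -> n <> 1 -> inA n (a, b, c) -> b * c <> 0.
Proof.
  intros hsq hn habc Hbc; simpl in habc.
  assert (Z.abs a = 1) as Ha by (apply hsq; exists 1; lia).
  apply hn; destruct (Z.abs_spec a) as [[_ E] | [_ E]]; nia.
Qed.

Section Descent.

Variable n : Z.
Hypothesis nondegenerate : forall a b c, inA n (a, b, c) -> b * c <> 0.

Definition height (t : triple) : nat := let '(a, _, _) := t in Z.abs_nat a.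

Lemma descent_step a b c :
  inA n (a, b, c) -> Z.abs b < Z.abs a \/ Z.abs c < Z.abs a ->
  exists f, realised f /\ inA n (f (a, b, c)) /\
            (height (f (a, b, c)) < height (a, b, c))%nat.
Proof.
  intros habc Hout.
  pose proof (nondegenerate a b c habc) as Hbc.
  destruct (Z_le_gt_dec (Z.abs a) (Z.abs c)) as [Hc | Hc].
  - (* |a| > |b|: invert first, then translate *)
    destruct (small_shift (- a) b ltac:(nia)) as [k Hk].
    exists (fun t => act_w k (act_x t)); repeat split.
    + apply realised_comp; [apply realised_w | apply realised_x].
    + now apply inA_w, inA_x.
    + cbv beta iota zeta delta [height act_w act_x]; lia.
  -
    destruct (small_shift a c ltac:(nia)) as [k Hk].
    exists (act_w k); repeat split.
    + apply realised_w.
    + now apply inA_w.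
    + cbv beta iota zeta delta [height act_w act_x]; lia.
Qed.

Lemma reduce_to_B t : inA n t -> exists f, realised f /\ inB n (f t).
Proof.
  induction t as [t IH] using (induction_ltof1 _ height); intro Ht.
  destruct t as [[a b] c].
  destruct (Z_le_gt_dec (Z.abs a) (Z.abs b)) as [Hb | Hb];
    destruct (Z_le_gt_dec (Z.abs a) (Z.abs c)) as [Hc | Hc].
  1: exists (fun s => s); split; [exact realised_id | easy].
  all: destruct (descent_step a b c Ht ltac:(lia)) as [f [Hf [HfA Hlt]]].
  all: destruct (IH (f (a, b, c)) Hlt HfA) as [h [Hh HhB]].
  all: exists (fun s => h (f s)); split; [now apply realised_comp | exact HhB].
Qed.

End Descent.

Theorem mainTheorem6 (n : Z) (hsq : squarefree n) (hn : n <> 1)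
  (a b c : Z) (habc : inA n (a, b, c)) :
  exists g : triple -> triple, H2 g /\ inB n (g (a, b, c)).
Proof.
  assert (nondeg : forall a b c, inA n (a, b, c) -> b * c <> 0)
    by (intros a0 b0 c0; now apply inA_nondegenerate).
  destruct (reduce_to_B n nondeg (a, b, c) habc) as [f [[g [Hg Eg]] Hf]].
  exists g; split; [exact Hg | now rewrite Eg].
Qed.
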